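(* Let $F$ be a forest on $n$ vertices (of arbitrary maximum degree) and let $\mathcal{U}$ be any UFO tree for $F$. Then $\mathcal{U}$ has height $O(\log n)$, contains $O(n)$ nodes (clusters) in total, and uses $O(n)$ space.
   Context: UFO trees. Let $F$ be a forest with vertex set $V$, $|V|=n$. A cluster is a vertex set inducing a connected subgraph of $F$. Level-$0$ clusters are the singletons $\{v\}$. The level-$i$ clusters partition $V$; two level-$i$ clusters are adjacent if an edge of $F$ joins them, and the degree of a cluster is the number of edges of $F$ with exactly one endpoint in it; a cluster is high degree if its degree is at least $3$. Level $i+1$ is obtained from level $i$ by choosing pairwise disjoint groups of level-$i$ clusters, each being an allowed merge: two adjacent clusters of degrees $\{1,1\}$, $\{1,2\}$ or $\{2,2\}$, or a high-degree cluster together with one or more adjacent degree-$1$ clusters. The choice must be maximal in the following sense: every high-degree cluster is grouped together with all of its adjacent degree-$1$ clusters, and among the remaining clusters of degree $1$ and $2$ the pairs form a maximal matching of allowed pairs (no two adjacent ungrouped clusters form an allowed pair). Each group is replaced by its union; each ungrouped cluster becomes a level-$(i+1)$ cluster by itself. This is repeated until every component of $F$ is one cluster. The UFO tree is the rooted forest of all clusters of all levels, the parent of a level-$i$ cluster being the level-$(i+1)$ cluster containing it; its height is the number of levels above level $0$. The space counts, for each cluster, its parent and children pointers and its adjacency list at its level. *)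

From mathcomp Require Import all_boot.
Set Implicit Arguments. Unset Strict Implicit. Unset Printing Implicit Defensive.

Section UFO.
Variables (T : finType) (e : rel T).

Definition forest : Prop :=
  [/\ symmetric e, irreflexive e &
      forall c : seq T, 2 < size c -> ~ ucycle e c].

(* degree of a cluster: number of edges with exactly one endpoint in C
   (each such edge counted once, as the ordered pair (inside, outside)). *)
Definition cdeg (C : {set T}) : nat :=
  #|[set p : T * T | [&& e p.1 p.2, p.1 \in C & p.2 \notin C]]|.

Definition cadj (C D : {set T}) : bool :=
  (C != D) && [exists x in C, exists y in D, e x y].

Definition low_deg (C : {set T}) : bool := (0 < cdeg C) && (cdeg C <= 2).

Definition singletons : {set {set T}} := [set [set x] | x : T].

Definition components : {set {set T}} := [set [set y | connect e x y] | x : T].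

Definition allowed_merge (P g : {set {set T}}) : bool :=
  (g \subset P) &&
  ([exists C in g, exists D in g,
      [&& g == [set C; D], cadj C D, low_deg C & low_deg D]]
   || [exists H in g, [&& 2 < cdeg H, g :\ H != set0 &
        [forall D in g :\ H, (cdeg D == 1) && cadj H D]]]).

Definition grouped (G : {set {set {set T}}}) (C : {set T}) : bool :=
  [exists g in G, C \in g].

Definition ufo_step (P Q : {set {set T}}) : Prop :=
  exists G : {set {set {set T}}},
  [/\ forall g, g \in G -> allowed_merge P g,
      forall g1 g2, g1 \in G -> g2 \in G -> g1 != g2 -> [disjoint g1 & g2],
      forall H D, H \in P -> D \in P -> 2 < cdeg H -> cdeg D = 1 -> cadj H D ->
        exists2 g, g \in G & (H \in g) && (D \in g),
      (* maximality of the matching among remaining degree-1/2 clusters *)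
      forall C D, C \in P -> D \in P -> ~~ grouped G C -> ~~ grouped G D ->
        cadj C D -> ~~ (low_deg C && low_deg D)
    & Q = [set cover g | g in G] :|: [set C in P | ~~ grouped G C]].

Definition is_ufo (L : nat -> {set {set T}}) (h : nat) : Prop :=
  [/\ L 0 = singletons,
      forall i, i < h -> ufo_step (L i) (L i.+1),
      L h = components &
      forall i, i < h -> L i != components].

(* nodes of the UFO tree: cluster C at level i, except copies of a cluster
   that was already a whole component (degree 0) at the previous level. *)
Definition is_node (L : nat -> {set {set T}}) (i : nat) (C : {set T}) : bool :=
  (C \in L i) && [|| i == 0, C \notin L i.-1 | 0 < cdeg C].

Definition ufo_nodes (L : nat -> {set {set T}}) (h : nat) : nat :=
  \sum_(i < h.+1) #|[set C | is_node L i C]|.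

(* space: per node, one parent pointer, its children pointers, and its
   adjacency list at its level *)
Definition ufo_space (L : nat -> {set {set T}}) (h : nat) : nat :=
  \sum_(i < h.+1) \sum_(C | is_node L i C)
     (1 + #|[set D | (0 < i) && is_node L i.-1 D && (D \subset C)]|
        + #|[set D in L i | cadj C D]|).

End UFO.

(* Call a cluster active when it has positive degree, i.e. when it is not yet
   a whole component. Every cluster induces a tree, so contracting the clusters
   of a level yields a forest again, and the active clusters have average
   degree below 2: if s is the total degree of the high-degree clusters, then
   s + 2 <= 2 #high + #leaves. The maximality conditions of a UFO step leave an
   active cluster unmerged only if it is high-degree, adjacent to a high-degree
   cluster, or adjacent to a merged low-degree cluster; with the degree count
   this bounds the unmerged active clusters by 14 times the merged ones, so the
   number of active clusters drops by a factor 29/30 from one level to the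
   next. This geometric decay gives height O(log n), and since every node above
   level 0 is active or was formed from active clusters of the level below, it
   also gives O(n) nodes and O(n) space. *)

From mathcomp Require Import all_boot zify.
Set Implicit Arguments. Unset Strict Implicit. Unset Printing Implicit Defensive.

Section Forest.
Variables (T : finType) (e : rel T).
Hypothesis forest_e : forest e.

Lemma forest_sym : symmetric e. Proof. by case: forest_e. Qed.
Lemma forest_irrefl : irreflexive e. Proof. by case: forest_e. Qed.

Lemma forest_path_no_chord x u p1 w p2 :
  uniq (x :: u :: p1 ++ w :: p2) -> path e x (u :: p1 ++ w :: p2) -> ~~ e x w.
Proof.
move=> uniq_p path_p; apply/negP => xw.
case: forest_e => _ _ /(_ (x :: u :: rcons p1 w)); apply; first by rewrite /= size_rcons.
have split_p : u :: p1 ++ w :: p2 = (u :: rcons p1 w) ++ p2.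
  by rewrite /= -cats1 -catA.
move: uniq_p path_p; rewrite split_p -cat_cons cat_uniq cat_path.
move=> /andP[uniq_c _] /andP[path_c _].
by rewrite /ucycle uniq_c andbT /cycle rcons_path path_c /= last_rcons forest_sym.
Qed.

Lemma forest_leaf_from_path (U : {set T}) x p :
  uniq (x :: p) -> all (mem U) (x :: p) -> path e x p ->
  exists2 v, v \in U & #|[set w in U | e v w]| <= 1.
Proof.
move: {2}(#|T| - size p) (leqnn (#|T| - size p)) => m.
elim: m x p => [|m IH] x p m_bound uniq_p U_p path_p.
  have := max_card (mem (x :: p)); rewrite (card_uniqP uniq_p) /= => long_p.
  by move: m_bound; rewrite leqn0 subn_eq0 leqNgt long_p.
case: (pickP [pred w | (w \in U) && e x w && (w \notin x :: p)]) => [w|no_ext].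
  case/andP=> /andP[wU xw] w_new; apply: (IH w (x :: p)) => /=.
  - by move: m_bound => /=; lia.
  - by rewrite w_new.
  - by rewrite wU.
  - by rewrite forest_sym xw.
(* [x] has no neighbour in [U] off the path; by acyclicity it has only one on it. *)
exists x; first by case/andP: U_p.
suff nbr_x w : w \in U -> e x w -> w = head x p.
  apply/card_le1_eqP => y z; rewrite !inE.
  by move=> /andP[/nbr_x/[apply]->] /andP[/nbr_x/[apply]->].
move=> wU xw; have := no_ext w; rewrite /= wU xw /= => /negbFE.
case: p uniq_p path_p {m_bound U_p no_ext} => [|u p] uniq_p path_p.
  by rewrite inE => /eqP wx; rewrite wx forest_irrefl in xw.
rewrite !inE => /or3P[/eqP wx|/eqP -> //|w_p].
  by rewrite wx forest_irrefl in xw.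
by case/splitPr: w_p uniq_p path_p => p1 p2 /forest_path_no_chord/[apply]; rewrite xw.
Qed.

Lemma forest_has_leaf (U : {set T}) : U != set0 ->
  exists2 v, v \in U & #|[set w in U | e v w]| <= 1.
Proof.
by case/set0Pn => x xU; apply: (@forest_leaf_from_path U x [::]); rewrite //= xU.
Qed.

Definition inner_arcs (A : {set T}) : nat :=
  #|[set p : T * T | [&& e p.1 p.2, p.1 \in A & p.2 \in A]]|.

Lemma inner_arcs0 : inner_arcs set0 = 0.
Proof. by apply/eqP; rewrite cards_eq0; apply/eqP/setP => p; rewrite !inE /= andbF. Qed.

Lemma inner_arcs_setD1 (U : {set T}) v :
  inner_arcs U <= inner_arcs (U :\ v) + 2 * #|[set w in U | e v w]|.
Proof.
set N := [set w in U | e v w].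
have arcs_sub : [set p : T * T | [&& e p.1 p.2, p.1 \in U & p.2 \in U]] \subset
   [set p : T * T | [&& e p.1 p.2, p.1 \in U :\ v & p.2 \in U :\ v]] :|:
   ([set (v, w) | w in N] :|: [set (w, v) | w in N]).
  apply/subsetP => -[a b]; rewrite /N !inE /= => /and3P[ab aU bU].
  have [av|na] := eqVneq a v.
    by apply/orP; right; apply/orP; left; apply/imsetP; exists b; rewrite ?av // inE bU -av.
  have [bv|nb] := eqVneq b v; last by rewrite ab aU bU.
  apply/orP; right; apply/orP; right; apply/imsetP; exists a.
    by rewrite inE aU forest_sym -bv.
  by rewrite bv.
apply: leq_trans (subset_leq_card arcs_sub) _; rewrite /inner_arcs.
apply: leq_trans (leq_card_setU _ _) _; rewrite leq_add2l.
apply: leq_trans (leq_card_setU _ _) _.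
by rewrite mul2n -addnn leq_add ?leq_imset_card.
Qed.

Lemma forest_inner_arcs (U : {set T}) : U != set0 -> inner_arcs U + 2 <= 2 * #|U|.
Proof.
move: {2}#|U| (erefl #|U|) => n; elim: n U => [|n IH] U cardU U0.
  by move: U0; rewrite -card_gt0 cardU.
have [v vU leaf_v] := forest_has_leaf U0.
have cardUv : #|U :\ v| = n by move: cardU; rewrite (cardsD1 v) vU => -[].
have nbrs_sub : [set w in U | e v w] \subset U :\ v.
  apply/subsetP => w; rewrite !inE => /andP[wU vw]; rewrite wU andbT.
  by apply: contraTneq vw => ->; rewrite forest_irrefl.
have := inner_arcs_setD1 U v; have := subset_leq_card nbrs_sub.
have [Uv0|Uv0] := eqVneq (U :\ v) set0.
  by rewrite Uv0 inner_arcs0 cards0 cardU; lia.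
by have := IH _ cardUv Uv0; rewrite cardU cardUv; lia.
Qed.

Lemma card_arcs_from (A : {set T}) (f : T -> T -> bool) :
  #|[set p : T * T | (p.1 \in A) && f p.1 p.2]| = \sum_(x in A) #|[set y | f x y]|.
Proof.
symmetry; under eq_bigr => x _ do rewrite -(sum1dep_card (f x)).
by rewrite pair_big_dep /= sum1dep_card.
Qed.

Lemma inner_arcs_sum (A : {set T}) :
  inner_arcs A = \sum_(x in A) #|[set y | e x y && (y \in A)]|.
Proof.
rewrite -card_arcs_from; apply: eq_card => p; rewrite !inE.
by case: (e p.1 p.2); case: (p.1 \in A).
Qed.

Lemma cdeg_sum (A : {set T}) :
  cdeg e A = \sum_(x in A) #|[set y | e x y && (y \notin A)]|.
Proof.
rewrite -card_arcs_from; apply: eq_card => p; rewrite !inE.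
by case: (e p.1 p.2); case: (p.1 \in A).
Qed.

Lemma inner_arcs_union (A D : {set T}) a d :
  [disjoint A & D] -> a \in A -> d \in D -> e a d ->
  inner_arcs A + inner_arcs D + 2 <= inner_arcs (A :|: D).
Proof.
move=> disAD aA dD ad.
set SA := [set p : T * T | [&& e p.1 p.2, p.1 \in A & p.2 \in A]].
set SD := [set p : T * T | [&& e p.1 p.2, p.1 \in D & p.2 \in D]].
have aD : a \in D = false := disjointFr disAD aA.
have dA : d \in A = false := disjointFl disAD dD.
have SAD0 : SA :&: SD = set0.
  apply/setP => p; rewrite !inE; apply/negbTE/negP.
  by case/andP=> /and3P[_ /(disjointFr disAD) -> _] /and3P[].
have cross0 : (SA :|: SD) :&: [set (a, d); (d, a)] = set0.
  by apply/setP => p; rewrite !inE; apply/negbTE/negP => /andP[+ /orP[]] => + /eqP E;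
    rewrite E /= aD dA !andbF.
have card_cross : #|[set (a, d); (d, a)]| = 2.
  by rewrite cards2; case: eqP => // -[ad_eq _]; rewrite ad_eq dD in aD.
have union_sub : (SA :|: SD) :|: [set (a, d); (d, a)] \subset
    [set p : T * T | [&& e p.1 p.2, p.1 \in A :|: D & p.2 \in A :|: D]].
  apply/subsetP => -[x y]; rewrite !inE /=.
  case/orP=> [/orP[]/and3P[-> xC yC]|/orP[]/eqP[-> ->]];
    by rewrite ?xC ?yC ?aA ?dD ?orbT ?ad // forest_sym ad.
have := subset_leq_card union_sub.
by rewrite cardsU cross0 cards0 subn0 cardsU SAD0 cards0 subn0 card_cross.
Qed.

Lemma cadj_sym : symmetric (cadj e).
Proof.
move=> C D; rewrite /cadj eq_sym; congr (_ && _).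
apply/existsP/existsP => -[x /andP[xC /existsP[y /andP[yD xy]]]];
  by exists y; rewrite yD /=; apply/existsP; exists x; rewrite xC forest_sym.
Qed.

Lemma cdeg_gt0 (C : {set T}) x y : e x y -> x \in C -> y \notin C -> 0 < cdeg e C.
Proof. by move=> xy xC yC; apply/card_gt0P; exists (x, y); rewrite inE /= xy xC yC. Qed.

(* [inner_arcs] counts every edge twice, so this says that each cluster spans at
   least [#|C| - 1] edges, i.e. (in a forest) that it induces a tree. *)
Definition tree_clusters (P : {set {set T}}) : Prop :=
  forall C, C \in P -> 2 * #|C| <= inner_arcs C + 2.

Definition connected_clusters (P : {set {set T}}) : Prop :=
  forall C, C \in P -> {in C &, forall x y, connect e x y}.

Definition active (P : {set {set T}}) : {set {set T}} := [set C in P | 0 < cdeg e C].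
Definition high (P : {set {set T}}) : {set {set T}} := [set C in P | 2 < cdeg e C].
Definition leaves (P : {set {set T}}) : {set {set T}} := [set C in P | cdeg e C == 1].

Definition neighbours (P S : {set {set T}}) : {set {set T}} :=
  [set D in P | [exists C in S, cadj e C D]].

Lemma low_or_high C : 0 < cdeg e C -> low_deg e C || (2 < cdeg e C).
Proof. by rewrite /low_deg => ->; case: leqP. Qed.

Section Partition.
Variable P : {set {set T}}.
Hypothesis partP : partition P [set: T].

Lemma pblockT_mem x : pblock P x \in P.
Proof. by case/and3P: partP => /eqP coverP _ _; apply: pblock_mem; rewrite coverP inE. Qed.

Lemma mem_pblockT x : x \in pblock P x.
Proof. by case/and3P: partP => /eqP coverP _ _; rewrite mem_pblock coverP inE. Qed.

Lemma pblockT_def C x : C \in P -> x \in C -> pblock P x = C.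
Proof. by case/and3P: partP => _ trivP _; apply: def_pblock. Qed.

Lemma blockT_eq C D x : C \in P -> D \in P -> x \in C -> x \in D -> C = D.
Proof. by move=> CP DP xC xD; rewrite -(pblockT_def CP xC) (pblockT_def DP xD). Qed.

Lemma blockT_neq0 C : C \in P -> C != set0.
Proof. by case/and3P: partP => _ _ P0 CP; apply: contraNneq P0 => <-. Qed.

Lemma cadj_cdeg_gt0 C D : C \in P -> D \in P -> cadj e C D -> 0 < cdeg e D.
Proof.
move=> CP DP /andP[CD /existsP[x /andP[xC /existsP[y /andP[yD xy]]]]].
apply: (@cdeg_gt0 _ y x); rewrite 1?forest_sym //.
by apply: contra CD => xD; rewrite (blockT_eq CP DP xC xD).
Qed.

Lemma cdeg_gt0_cadj C : C \in P -> 0 < cdeg e C -> exists2 D, D \in P & cadj e C D.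
Proof.
move=> CP /card_gt0P[[x y]]; rewrite inE /= => /and3P[xy xC yC].
exists (pblock P y); first exact: pblockT_mem.
apply/andP; split; first by apply: contraNneq yC => ->; apply: mem_pblockT.
by apply/existsP; exists x; rewrite xC /=; apply/existsP; exists y; rewrite mem_pblockT.
Qed.

Lemma card_cadj_le_cdeg C : C \in P -> #|[set D in P | cadj e C D]| <= cdeg e C.
Proof.
move=> CP.
set out := [set p : T * T | [&& e p.1 p.2, p.1 \in C & p.2 \notin C]].
have adj_sub : [set D in P | cadj e C D] \subset (fun p : T * T => pblock P p.2) @: out.
  apply/subsetP => D; rewrite inE => /andP[DP /andP[CD]].
  case/existsP=> x /andP[xC /existsP[y /andP[yD xy]]].
  apply/imsetP; exists (x, y); last by rewrite /= (pblockT_def DP yD).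
  rewrite inE /= xy xC /=; apply: contra CD => yC.
  by rewrite (blockT_eq CP DP yC yD).
exact: leq_trans (subset_leq_card adj_sub) (leq_imset_card _ _).
Qed.

Lemma card_neighbours_le (S : {set {set T}}) :
  S \subset P -> #|neighbours P S| <= \sum_(C in S) cdeg e C.
Proof.
move=> SP.
have nbrs_sub : neighbours P S \subset \bigcup_(C in S) [set D in P | cadj e C D].
  apply/subsetP => D; rewrite inE => /andP[DP /existsP[C /andP[CS CD]]].
  by apply/bigcupP; exists C; rewrite // inE DP.
apply: leq_trans (subset_leq_card nbrs_sub) _.
elim/big_ind2: _ => [|A m B n Am Bn|C CS]; first by rewrite cards0.
  by rewrite cardsU (leq_trans (leq_subr _ _)) ?leq_add.
by apply: card_cadj_le_cdeg; apply: (subsetP SP).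
Qed.

Lemma active_nbr_cover C x y : C \in active P -> x \in C -> e x y -> y \in cover (active P).
Proof.
move=> CK xC xy; have CP : C \in P by case/setIdP: CK.
apply/bigcupP; exists (pblock P y); last exact: mem_pblockT.
rewrite inE pblockT_mem /=; have [yC|yC] := boolP (y \in C).
  by rewrite (pblockT_def CP yC); case/setIdP: CK.
apply: (@cdeg_gt0 _ y x); [by rewrite forest_sym | exact: mem_pblockT |].
by apply: contra yC => xB; rewrite -(blockT_eq (pblockT_mem y) CP xB xC) mem_pblockT.
Qed.

(* Contracting the active clusters gives a forest whose edges, counted twice,
   are the cross edges counted by [cdeg]. *)
Lemma sum_active_cdeg : tree_clusters P -> active P != set0 ->
  \sum_(C in active P) cdeg e C + 2 <= 2 * #|active P|.
Proof.
move=> treeP K0; set K := active P.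
have KP : K \subset P by apply/subsetP => C /setIdP[].
have trivK : trivIset K by apply: trivIsetS KP _; case/and3P: partP.
set U := cover K.
have arcsU : inner_arcs U = \sum_(C in K) (inner_arcs C + cdeg e C).
  rewrite inner_arcs_sum big_trivIset //; apply: eq_bigr => C CK.
  rewrite inner_arcs_sum cdeg_sum -big_split /=; apply: eq_bigr => x xC.
  rewrite -(cardsID C [set y | e x y && (y \in U)]); congr (_ + _); apply: eq_card => y;
    rewrite !inE; case xy: (e x y); rewrite /= ?andbF //;
    by rewrite (active_nbr_cover CK xC xy) ?andbT.
have U0 : U != set0.
  case/set0Pn: K0 => C CK; case/set0Pn: (blockT_neq0 (subsetP KP _ CK)) => x xC.
  by apply/set0Pn; exists x; apply/bigcupP; exists C.
have cardU : #|U| = \sum_(C in K) #|C| by rewrite (eqP trivK).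
have sum_tree : \sum_(C in K) 2 * #|C| <= \sum_(C in K) (inner_arcs C + 2).
  by apply: leq_sum => C /(subsetP KP); apply: treeP.
have := forest_inner_arcs U0; move: sum_tree.
rewrite arcsU cardU -big_distrr !big_split /= sum_nat_const.
(* [set] merges convertible but syntactically different copies of [#|K|]. *)
set k := #|K|; lia.
Qed.

Lemma sum_high_cdeg : tree_clusters P -> active P != set0 ->
  \sum_(C in high P) cdeg e C + 2 <= 2 * #|high P| + #|leaves P|.
Proof.
move=> treeP K0; set K := active P; set M := K :\: high P.
have KH : K :&: high P = high P.
  by apply/setIidPr/subsetP => C /setIdP[CP hC]; rewrite inE CP (leq_ltn_trans _ hC).
have ML : M :&: leaves P = leaves P.
  by apply/setIidPr/subsetP => C /setIdP[CP /eqP C1]; rewrite !inE CP C1.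
have card_K : #|high P| + #|M| = #|K| by rewrite -{1}KH cardsID.
have card_M : #|leaves P| + #|M :\: leaves P| = #|M| by rewrite -{1}ML cardsID.
have sum_leaves : \sum_(C in leaves P) cdeg e C = #|leaves P|.
  by rewrite -sum1_card; apply: eq_bigr => C /setIdP[_ /eqP].
have sum_mid : 2 * #|M :\: leaves P| <= \sum_(C in M :\: leaves P) cdeg e C.
  rewrite mulnC -sum_nat_const; apply: leq_sum => C; rewrite !inE.
  by case: (C \in P) => //=; lia.
have sum_K : \sum_(C in high P) cdeg e C
    + (#|leaves P| + \sum_(C in M :\: leaves P) cdeg e C) + 2 <= 2 * #|K|.
  rewrite -sum_leaves -{1}ML -big_setID -{1}KH -big_setID.
  exact: sum_active_cdeg.
lia.
Qed.

Lemma sum_cdeg_le_active : tree_clusters P -> \sum_(C in P) cdeg e C <= 2 * #|active P|.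
Proof.
move=> treeP.
have -> : \sum_(C in P) cdeg e C = \sum_(C in active P) cdeg e C.
  rewrite [RHS]big_mkcond [LHS]big_mkcond /=; apply: eq_bigr => C _; rewrite inE.
  by case: (C \in P) => //=; case: (cdeg e C).
have [->|K0] := eqVneq (active P) set0; first by rewrite big_set0.
by apply: leq_trans (leq_addr 2 _) (sum_active_cdeg treeP K0).
Qed.

Lemma sum_card_sub_blocks (S N : {set {set T}}) : S \subset P -> set0 \notin N ->
  \sum_(C in S) #|[set D in N | D \subset C]| <= #|N|.
Proof.
move=> SP N0.
have count_sub (A : {set {set T}}) (a : pred {set T}) :
    #|[set D in A | a D]| = \sum_(D in A) a D.
  by rewrite -sum1dep_card big_mkcondr /=; apply: eq_bigr => D _; case: (a D).
under eq_bigr => C _ do rewrite (count_sub N (fun D => D \subset C)).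
rewrite exchange_big /= -sum1_card; apply: leq_sum => D DN.
rewrite -(count_sub S (fun C => D \subset C)).
apply/card_le1_eqP => C1 C2; rewrite !inE => /andP[C1S DC1] /andP[C2S DC2].
have /set0Pn[x xD] : D != set0 by apply: contraNneq N0 => <-.
exact: blockT_eq (subsetP SP _ C2S) (subsetP SP _ C1S) (subsetP DC2 _ xD) (subsetP DC1 _ xD).
Qed.

Lemma active0_components : connected_clusters P -> active P = set0 -> P = components e.
Proof.
move=> connP K0.
have pblockE x : pblock P x = [set y | connect e x y].
  apply/setP => y; rewrite inE; apply/idP/idP.
    by apply: (connP _ (pblockT_mem x)); apply: mem_pblockT.
  have closedB : closed e (pblock P x).
    suff closedB u v : e u v -> u \in pblock P x -> v \in pblock P x.
      by move=> u v uv; apply/idP/idP; apply: closedB; rewrite // forest_sym.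
    move=> uv uB; apply/negPn/negP => vB.
    have : pblock P x \in active P by rewrite inE pblockT_mem (cdeg_gt0 uv uB vB).
    by rewrite K0 inE.
  by move=> /(closed_connect closedB); rewrite mem_pblockT => <-.
apply/setP => C; apply/idP/imsetP => [CP|[x _ ->]]; last by rewrite -pblockE pblockT_mem.
case/set0Pn: (blockT_neq0 CP) => x xC.
by exists x; rewrite // -pblockE (pblockT_def CP xC).
Qed.

Section Star.
Variables (g : {set {set T}}) (R : {set T}).
Hypotheses (gP : g \subset P) (Rg : R \in g)
  (star_g : forall D, D \in g -> D != R -> cadj e R D).

Let RP : R \in P. Proof. exact: subsetP gP _ Rg. Qed.

Lemma cover_star_tree : tree_clusters P -> 2 * #|cover g| <= inner_arcs (cover g) + 2.
Proof.
move=> treeP.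
suff star_sub (S : {set {set T}}) : S \subset g :\ R ->
    2 * #|R :|: cover S| <= inner_arcs (R :|: cover S) + 2.
  have coverg : cover g = R :|: cover (g :\ R).
    by rewrite /cover -{1}(setD1K Rg) big_setU1 //= setD11.
  by rewrite coverg; apply: star_sub.
move: {2}#|S| (erefl #|S|) => n; elim: n S => [|n IH] S cardS SgR.
  move/eqP: cardS; rewrite cards_eq0 => /eqP->.
  by rewrite /cover big_set0 setU0; apply: treeP.
have /card_gt0P[D DS] : 0 < #|S| by rewrite cardS.
have /setD1P[DR Dg] := subsetP SgR _ DS.
have DP := subsetP gP _ Dg.
have cardS' : #|S :\ D| = n by move: cardS; rewrite (cardsD1 D) DS => -[].
have IH' := IH _ cardS' (subset_trans (subD1set S D) SgR).
have coverS : R :|: cover S = (R :|: cover (S :\ D)) :|: D.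
  by rewrite /cover -{1}(setD1K DS) big_setU1 //= ?setD11 // setUCA setUC.
have disj : [disjoint R :|: cover (S :\ D) & D].
  apply/pred0P => z /=; apply/negbTE/negP => /andP[].
  rewrite inE => /orP[zR|/bigcupP[B /setD1P[BD BS] zB]] zD.
    by move: DR; rewrite (blockT_eq DP RP zD zR) eqxx.
  have /setD1P[_ Bg] := subsetP SgR _ BS.
  by move: BD; rewrite (blockT_eq (subsetP gP _ Bg) DP zB zD) eqxx.
case/andP: (star_g Dg DR) => _ /existsP[a /andP[aR /existsP[d /andP[dD ad]]]].
have aU : a \in R :|: cover (S :\ D) by rewrite inE aR.
rewrite coverS cardsU (disjoint_setI0 disj) cards0 subn0 mulnDr.
apply: leq_trans (leq_add IH' (treeP _ DP)) _.
by rewrite addnACA addnA leq_add2r (inner_arcs_union disj aU dD ad).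
Qed.

Lemma cover_star_connected : connected_clusters P ->
  {in cover g &, forall x y, connect e x y}.
Proof.
move=> connP; case/set0Pn: (blockT_neq0 RP) => r rR.
suff to_r z : z \in cover g -> connect e z r.
  move=> x y /to_r xr /to_r yr; apply: connect_trans xr _.
  by rewrite (sym_connect_sym forest_sym).
move=> /bigcupP[B Bg zB]; have BP := subsetP gP _ Bg.
have [BR|BR] := eqVneq B R; first by rewrite BR in zB; apply: connP zB rR.
case/andP: (star_g Bg BR) => _ /existsP[a /andP[aR /existsP[b /andP[bB ab]]]].
apply: connect_trans (connP _ BP _ _ zB bB) _.
apply: connect_trans (connP _ RP _ _ aR rR); apply: connect1.
by rewrite forest_sym.
Qed.
End Star.

End Partition.

Lemma allowed_merge_star P g : allowed_merge e P g ->
  [/\ g \subset P, 2 <= #|g|, {in g, forall C, 0 < cdeg e C} &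
      exists2 R, R \in g & forall D, D \in g -> D != R -> cadj e R D].
Proof.
case/andP=> gP /orP[|].
  case/existsP=> C /andP[Cg /existsP[D /andP[Dg /and4P[/eqP defg CD lowC lowD]]]].
  have CneqD : C != D by case/andP: CD.
  split=> //; first by rewrite defg cards2 CneqD.
    by move=> X; rewrite defg !inE => /orP[]/eqP->; [case/andP: lowC | case/andP: lowD].
  by exists C => // X; rewrite defg !inE => /orP[]/eqP-> //; rewrite eqxx.
case/existsP=> H /andP[Hg /and3P[highH gH0 /forallP leavesH]].
split=> //; first by rewrite (cardsD1 H) Hg ltnS card_gt0.
  move=> X Xg; have [->|XH] := eqVneq X H; first exact: leq_ltn_trans highH.
  by have := leavesH X; rewrite !inE XH Xg => /andP[/eqP->].
by exists H => // X Xg XH; have := leavesH X; rewrite !inE XH Xg => /andP[].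
Qed.

Section Step.
Variables (P Q : {set {set T}}) (G : {set {set {set T}}}).
Hypothesis partP : partition P [set: T].
Hypothesis merges : forall g, g \in G -> allowed_merge e P g.
Hypothesis disjG : forall g1 g2, g1 \in G -> g2 \in G -> g1 != g2 -> [disjoint g1 & g2].
Hypothesis high_grouped : forall H D, H \in P -> D \in P -> 2 < cdeg e H -> cdeg e D = 1 ->
  cadj e H D -> exists2 g, g \in G & (H \in g) && (D \in g).
Hypothesis matching_maximal : forall C D, C \in P -> D \in P -> ~~ grouped G C ->
  ~~ grouped G D -> cadj e C D -> ~~ (low_deg e C && low_deg e D).
Hypothesis defQ : Q = [set cover g | g in G] :|: [set C in P | ~~ grouped G C].

Lemma merge_sub g : g \in G -> g \subset P.
Proof. by case/merges/allowed_merge_star. Qed.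

Lemma pblock_merge g x : g \in G -> x \in cover g -> pblock P x \in g.
Proof.
move=> gG /bigcupP[B Bg xB].
by rewrite (pblockT_def partP (subsetP (merge_sub gG) _ Bg) xB).
Qed.

Lemma ufo_step_block_eq A B x : A \in Q -> B \in Q -> x \in A -> x \in B -> A = B.
Proof.
have merged_lone g C : g \in G -> C \in P -> ~~ grouped G C -> x \in cover g -> x \notin C.
  move=> gG CP lone_C xg; move: lone_C; apply: contraNN => xC; apply/existsP; exists g.
  by rewrite gG -(pblockT_def partP CP xC) pblock_merge.
rewrite defQ !inE => /orP[/imsetP[g1 g1G ->]|/andP[C1P lone1]].
  case/orP=> [/imsetP[g2 g2G ->]|/andP[C2P lone2]] x1 x2; last first.
    by rewrite (negPf (merged_lone _ _ g1G C2P lone2 x1)) in x2.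
  have [->//|g12] := eqVneq g1 g2.
  have := pblock_merge g2G x2.
  by rewrite (disjointFr (disjG g1G g2G g12) (pblock_merge g1G x1)).
case/orP=> [/imsetP[g2 g2G ->]|/andP[C2P _]] x1 x2.
  by rewrite (negPf (merged_lone _ _ g2G C1P lone1 x2)) in x1.
exact: (blockT_eq partP C1P C2P x1 x2).
Qed.

Lemma ufo_step_partition : partition Q [set: T].
Proof.
apply/and3P; split.
- apply/eqP/setP => x; rewrite inE; apply/bigcupP.
  have [/existsP[g /andP[gG xg]]|lone_x] := boolP (grouped G (pblock P x)).
    exists (cover g); first by rewrite defQ inE; apply/orP; left; apply/imsetP; exists g.
    by apply/bigcupP; exists (pblock P x); rewrite // mem_pblockT.
  by exists (pblock P x); rewrite ?mem_pblockT // defQ !inE pblockT_mem // lone_x orbT.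
- apply/trivIsetP => A B AQ BQ AB; apply/pred0P => x /=; apply/negbTE/negP => /andP[xA xB].
  by move/eqP: AB; apply; apply: ufo_step_block_eq AQ BQ xA xB.
- rewrite defQ !inE negb_or; apply/andP; split.
    apply/imsetP => -[g gG g0]; case/merges/allowed_merge_star: gG => gP g2 _ _.
    have /card_gt0P[B Bg] : 0 < #|g| by apply: leq_trans g2.
    case/set0Pn: (blockT_neq0 partP (subsetP gP _ Bg)) => y yB.
    have : y \in cover g by apply/bigcupP; exists B.
    by rewrite -g0 inE.
  by apply/negP => /andP[/(blockT_neq0 partP)]; rewrite eqxx.
Qed.

Lemma ufo_step_tree : tree_clusters P -> tree_clusters Q.
Proof.
move=> treeP A; rewrite defQ !inE => /orP[/imsetP[g gG ->]|/andP[AP _]]; last exact: treeP.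
case/merges/allowed_merge_star: gG => gP _ _ [R Rg star_g].
exact: (cover_star_tree partP gP Rg star_g treeP).
Qed.

Lemma ufo_step_connected : connected_clusters P -> connected_clusters Q.
Proof.
move=> connP A; rewrite defQ !inE => /orP[/imsetP[g gG ->]|/andP[AP _]]; last exact: connP.
case/merges/allowed_merge_star: gG => gP _ _ [R Rg star_g].
exact: (cover_star_connected partP gP Rg star_g connP).
Qed.

Definition merged := [set C in P | grouped G C].
Definition merged_low := [set C in merged | low_deg e C].
Definition lone := [set C in active P | ~~ grouped G C].

Lemma mergedE : merged = cover G.
Proof.
apply/setP => C; rewrite !inE; apply/andP/bigcupP => [[_ /existsP[g /andP[gG Cg]]]|[g gG Cg]].
  by exists g.
by split; [exact: subsetP (merge_sub gG) _ Cg | apply/existsP; exists g; rewrite gG].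
Qed.

Lemma card_merges : 2 * #|G| <= #|merged|.
Proof.
have trivG : trivIset G by apply/trivIsetP => g1 g2 g1G g2G; apply: disjG.
rewrite mergedE -(eqP trivG) mulnC -sum_nat_const; apply: leq_sum => g gG.
by case/merges/allowed_merge_star: gG.
Qed.

Lemma card_active_split : #|active P| = #|merged| + #|lone|.
Proof.
have merged_active : merged \subset active P.
  apply/subsetP => C; rewrite !inE => /andP[CP /existsP[g /andP[gG Cg]]].
  by rewrite CP; case/merges/allowed_merge_star: gG => _ _ /(_ C Cg).
rewrite -(cardsID merged (active P)) (setIidPr merged_active); congr (_ + _).
by apply: eq_card => C; rewrite !inE; case: (C \in P); rewrite //= andbC.
Qed.

Lemma card_active_step : #|active Q| <= #|G| + #|lone|.
Proof.
have activeQ_sub : active Q \subset [set cover g | g in G] :|: lone.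
  apply/subsetP => A; rewrite inE defQ !inE => /andP[/orP[->//|/andP[AP lone_A]] A0].
  by rewrite AP lone_A A0 !orbT.
apply: leq_trans (subset_leq_card activeQ_sub) _.
by apply: leq_trans (leq_card_setU _ _) _; rewrite leq_add2r leq_imset_card.
Qed.

Lemma card_new_clusters : #|[set C in Q | C \notin P]| <= #|G|.
Proof.
have new_sub : [set C in Q | C \notin P] \subset [set cover g | g in G].
  apply/subsetP => A; rewrite !inE defQ !inE => /andP[/orP[//|/andP[AP _]]].
  by rewrite AP.
exact: leq_trans (subset_leq_card new_sub) (leq_imset_card _ _).
Qed.

Lemma lone_sub : lone \subset
  (neighbours P merged_low :|: high P) :|: neighbours P (high P).
Proof.
apply/subsetP => X; rewrite !inE => /andP[/andP[XP X0] lone_X]; rewrite XP /=.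
have [highX|lowX] := boolP (2 < cdeg e X); first by rewrite orbT.
have [N NP XN] := cdeg_gt0_cadj partP XP X0.
have [highN|lowN] := boolP (2 < cdeg e N).
  by apply/orP; right; apply/existsP; exists N; rewrite inE NP highN cadj_sym.
have {}lowN : low_deg e N.
  by move: (low_or_high (cadj_cdeg_gt0 partP XP NP XN)); rewrite (negPf lowN) orbF.
have {}lowX : low_deg e X by move: (low_or_high X0); rewrite (negPf lowX) orbF.
have [groupedN|lone_N] := boolP (grouped G N).
  apply/orP; left; apply/orP; left; apply/existsP; exists N.
  by rewrite !inE NP groupedN lowN cadj_sym.
by move: (matching_maximal XP NP lone_X lone_N XN); rewrite lowX lowN.
Qed.

Lemma leaves_sub : leaves P \subset merged :|: neighbours P merged_low.
Proof.
apply/subsetP => X; rewrite !inE => /andP[XP /eqP X1]; rewrite XP /=.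
have [//|lone_X] := boolP (grouped G X); apply/existsP.
have X0 : 0 < cdeg e X by rewrite X1.
have [N NP XN] := cdeg_gt0_cadj partP XP X0.
have [highN|lowN] := boolP (2 < cdeg e N).
  have [g gG /andP[_ Xg]] := high_grouped NP XP highN X1 (etrans (cadj_sym _ _) XN).
  by case/negP: lone_X; apply/existsP; exists g; rewrite gG.
have {}lowN : low_deg e N.
  by move: (low_or_high (cadj_cdeg_gt0 partP XP NP XN)); rewrite (negPf lowN) orbF.
have [groupedN|lone_N] := boolP (grouped G N).
  by exists N; rewrite !inE NP groupedN lowN cadj_sym.
have lowX : low_deg e X by rewrite /low_deg X1.
by move: (matching_maximal XP NP lone_X lone_N XN); rewrite lowX lowN.
Qed.

Lemma sum_merged_low_cdeg : \sum_(C in merged_low) cdeg e C <= 2 * #|merged|.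
Proof.
apply: (@leq_trans (2 * #|merged_low|)).
  by rewrite mulnC -sum_nat_const; apply: leq_sum => C /setIdP[_ /andP[]].
by rewrite leq_mul2l subset_leq_card //; apply/subsetP => C /setIdP[].
Qed.

Lemma card_lone : tree_clusters P -> #|lone| <= 14 * #|merged|.
Proof.
move=> treeP; have [K0|K0] := eqVneq (active P) set0.
  suff -> : lone = set0 by rewrite cards0.
  by apply/eqP; rewrite -subset0 -K0; apply/subsetP => C /setIdP[].
have high_sum := sum_high_cdeg partP treeP K0.
have high_card : 3 * #|high P| <= \sum_(C in high P) cdeg e C.
  by rewrite mulnC -sum_nat_const; apply: leq_sum => C /setIdP[].
have merged_lowP : merged_low \subset P.
  by apply/subsetP => C /setIdP[/setIdP[]].
have highP : high P \subset P by apply/subsetP => C /setIdP[].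
have nbrs_low := leq_trans (card_neighbours_le partP merged_lowP) sum_merged_low_cdeg.
have nbrs_high := card_neighbours_le partP highP.
have card_lone_sub := subset_leq_card lone_sub.
have card_leaves := subset_leq_card leaves_sub.
have card_U1 := leq_card_setU (neighbours P merged_low :|: high P) (neighbours P (high P)).
have card_U2 := leq_card_setU (neighbours P merged_low) (high P).
have card_U3 := leq_card_setU merged (neighbours P merged_low).
move/leq_of_leqif in card_U1; move/leq_of_leqif in card_U2; move/leq_of_leqif in card_U3.
(* With [s] the total degree of the high clusters and [m := #|merged|]:
   [s <= 3 * #|leaves P| <= 9 * m], hence [#|lone| <= 2 * m + s / 3 + s <= 14 * m]. *)
lia.
Qed.

End Step.

Lemma ufo_step_invariants P Q :
  partition P [set: T] -> tree_clusters P -> connected_clusters P -> ufo_step e P Q ->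
  [/\ partition Q [set: T], tree_clusters Q & connected_clusters Q].
Proof.
move=> partP treeP connP [G [merges disjG _ _ defQ]].
split; first exact: (ufo_step_partition partP merges disjG defQ).
  exact: (ufo_step_tree partP merges defQ treeP).
exact: (ufo_step_connected partP merges defQ connP).
Qed.

Lemma ufo_step_active_decay P Q : partition P [set: T] -> tree_clusters P ->
  ufo_step e P Q -> 30 * #|active Q| <= 29 * #|active P|.
Proof.
move=> partP treeP [G [merges disjG high_grouped maximal defQ]].
have := card_active_step defQ; have := card_merges merges disjG.
have := card_active_split merges; have := card_lone partP high_grouped maximal treeP.
lia.
Qed.

Lemma ufo_step_card_new P Q : partition P [set: T] -> ufo_step e P Q ->
  #|[set C in Q | C \notin P]| <= #|active P|.
Proof.
move=> partP [G [merges disjG _ _ defQ]].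
have := card_new_clusters defQ; have := card_merges merges disjG.
have := card_active_split merges.
lia.
Qed.

End Forest.

Lemma singletons_invariants (T : finType) (e : rel T) :
  [/\ partition (singletons T) [set: T], tree_clusters e (singletons T)
    & connected_clusters e (singletons T)].
Proof.
have singletonP C : C \in singletons T -> exists x, C = [set x].
  by case/imsetP=> x _ ->; exists x.
split.
- apply/and3P; split.
  + apply/eqP/setP => x; rewrite inE; apply/bigcupP; exists [set x]; last by rewrite inE.
    by apply/imsetP; exists x.
  + apply/trivIsetP => A B /singletonP[a ->] /singletonP[b ->] ab.
    by rewrite disjoints1 inE; apply: contra ab => /eqP->.
  + by apply/negP => /singletonP[x] /setP/(_ x); rewrite !inE eqxx.
- by move=> C /singletonP[x ->]; rewrite cards1 leq_addl.
- by move=> C /singletonP[z ->] x y; rewrite !inE => /eqP-> /eqP->; apply: connect0.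
Qed.

Lemma bernoulli_nat a m : a ^ m * (a + m) <= a * a.+1 ^ m.
Proof.
elim: m => [|m IH]; first by rewrite !expn0 mul1n muln1 addn0.
by rewrite !expnS; move: (a ^ m) (a.+1 ^ m) IH => x y; nia.
Qed.

Lemma two_pow_le a : 0 < a -> 2 * a ^ a <= a.+1 ^ a.
Proof.
move=> a0; rewrite -(leq_pmul2l a0) (leq_trans _ (bernoulli_nat a a)) //.
by rewrite addnn -mul2n [leqRHS]mulnC mulnA [a * 2]mulnC.
Qed.

Section Decay.
Variables (b : nat) (f : nat -> nat) (h : nat).
Hypothesis f_decay : forall i, i < h -> b.+1 * f i.+1 <= b * f i.

Lemma decay_pow j : j <= h -> b.+1 ^ j * f j <= b ^ j * f 0.
Proof.
elim: j => [|j IH] jh; first by rewrite !expn0.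
rewrite !expnS -!mulnA mulnCA.
apply: leq_trans (leq_mul (leqnn _) (f_decay jh)) _.
by rewrite mulnCA leq_mul2l IH ?orbT // ltnW.
Qed.

Lemma decay_sum m : m <= h -> \sum_(i < m) f i + b.+1 * f m <= b.+1 * f 0.
Proof.
elim: m => [|m IH] mh; first by rewrite big_ord0.
rewrite big_ord_recr /= -addnA; apply: leq_trans _ (IH (ltnW mh)).
by rewrite leq_add2l [leqRHS]mulSn leq_add2l f_decay.
Qed.

Lemma decay_sum_all : \sum_(i < h.+1) f i <= b.+1 * f 0.
Proof.
rewrite big_ord_recr /=; apply: leq_trans (decay_sum (leqnn h)).
by rewrite leq_add2l leq_pmull.
Qed.

(* Over [b] steps [f] shrinks by a factor [(b/(b+1))^b <= 1/2] (two_pow_le). *)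
Lemma decay_height n : 0 < b -> f 0 <= n -> (forall i, i < h -> 0 < f i) ->
  h <= b * (trunc_log 2 n).+1.
Proof.
move=> b0 f0n f_pos; have [->//|h0] := posnP h.
set q := h.-1 %/ b.
have bq_lt_h : b * q < h by rewrite mulnC (leq_ltn_trans (leq_divM _ _)) // prednK.
have pow_n : b.+1 ^ (b * q) <= b ^ (b * q) * n.
  apply: leq_trans (leq_pmulr _ (f_pos _ bq_lt_h)) _.
  by apply: leq_trans (decay_pow (ltnW bq_lt_h)) _; rewrite leq_mul2l f0n orbT.
have pow_2 : 2 ^ q * b ^ (b * q) <= b.+1 ^ (b * q).
  rewrite !expnM -expnMn; have [->//|q0] := posnP q.
  by rewrite leq_exp2r // two_pow_le.
have two_q : 2 ^ q <= n.
  by have := leq_trans pow_2 pow_n; rewrite mulnC leq_pmul2l // expn_gt0 b0.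
have h_le : h <= b * q.+1 by rewrite -(prednK h0) mulnC ltn_ceil.
by apply: leq_trans h_le _; rewrite leq_mul2l ltnS trunc_log_max ?orbT.
Qed.

End Decay.

Section UFOTree.
Variables (T : finType) (e : rel T) (L : nat -> {set {set T}}) (h : nat).
Hypotheses (forest_e : forest e) (ufoL : is_ufo e L h).

Local Notation act i := #|active e (L i)|.
Local Notation nodes i := #|[set C | is_node e L i C]|.

Lemma ufo_level_invariants i : i <= h ->
  [/\ partition (L i) [set: T], tree_clusters e (L i) & connected_clusters e (L i)].
Proof.
case: ufoL => L0 steps _ _; elim: i => [|i IH] ih.
  by rewrite L0; apply: singletons_invariants.
by case: (IH (ltnW ih)) => partL treeL connL; apply: ufo_step_invariants (steps i ih).
Qed.

Lemma ufo_active_decay i : i < h -> 30 * act i.+1 <= 29 * act i.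
Proof.
move=> ih; case: (ufo_level_invariants (ltnW ih)) => partL treeL _.
by case: ufoL => _ steps _ _; apply: ufo_step_active_decay (steps i ih).
Qed.

Lemma ufo_card_new i : i < h -> #|[set C in L i.+1 | C \notin L i]| <= act i.
Proof.
move=> ih; case: (ufo_level_invariants (ltnW ih)) => partL _ _.
by case: ufoL => _ steps _ _; apply: ufo_step_card_new (steps i ih).
Qed.

Lemma ufo_active_gt0 i : i < h -> 0 < act i.
Proof.
move=> ih; case: (ufo_level_invariants (ltnW ih)) => partL _ connL.
case: ufoL => _ _ _ /(_ i ih); apply: contraNT; rewrite -leqNgt leqn0 cards_eq0 => /eqP K0.
by rewrite (active0_components forest_e partL connL K0).
Qed.

Lemma card_level0 : #|L 0| <= #|T|.
Proof. by case: ufoL => -> _ _ _; apply: leq_imset_card. Qed.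

Lemma ufo_active0 : act 0 <= #|T|.
Proof. by apply: leq_trans card_level0; apply/subset_leq_card/subsetP => C /setIdP[]. Qed.

Lemma sum_ufo_active : \sum_(i < h.+1) act i <= 30 * #|T|.
Proof.
by apply: leq_trans (decay_sum_all ufo_active_decay) _; rewrite leq_mul2l ufo_active0 orbT.
Qed.

Lemma card_nodes0 : nodes 0 <= #|T|.
Proof.
apply: leq_trans card_level0.
by apply/subset_leq_card/subsetP => C; rewrite inE => /andP[].
Qed.

Lemma card_nodesS i : i < h -> nodes i.+1 <= act i.+1 + act i.
Proof.
move=> ih.
have nodes_sub : [set C | is_node e L i.+1 C] \subset
    active e (L i.+1) :|: [set C in L i.+1 | C \notin L i].
  apply/subsetP => C; rewrite !inE /is_node /= => /andP[CL /orP[newC|C0]];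
    by rewrite CL ?newC ?C0 ?orbT.
apply: leq_trans (subset_leq_card nodes_sub) _.
by apply: leq_trans (leq_card_setU _ _) _; rewrite leq_add2l ufo_card_new.
Qed.

Lemma sum_card_adj_le i : i <= h ->
  \sum_(C | is_node e L i C) #|[set D in L i | cadj e C D]| <= 2 * act i.
Proof.
move=> ih; case: (ufo_level_invariants ih) => partL treeL _.
apply: leq_trans (sum_cdeg_le_active forest_e partL treeL).
rewrite [leqRHS]big_mkcond [leqLHS]big_mkcond /=; apply: leq_sum => C _.
by case: ifP => [/andP[CL _]|//]; rewrite CL (card_cadj_le_cdeg e partL CL).
Qed.

Lemma sum_card_children_le i : i < h ->
  \sum_(C | is_node e L i.+1 C) #|[set D | (0 < i.+1) && is_node e L i D && (D \subset C)]|
    <= nodes i.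
Proof.
move=> ih; case: (ufo_level_invariants (ltnW ih)) => partL _ _.
case: (ufo_level_invariants ih) => partLS _ _.
have nodes_sub : [set C | is_node e L i.+1 C] \subset L i.+1.
  by apply/subsetP => C; rewrite inE => /andP[].
have nodes_neq0 : set0 \notin [set D | is_node e L i D].
  by rewrite inE; apply/negP => /andP[/(blockT_neq0 partL)]; rewrite eqxx.
apply: leq_trans (sum_card_sub_blocks partLS nodes_sub nodes_neq0); apply: eq_leq.
apply: eq_big => [C|C _]; first by rewrite inE.
by apply: eq_card => D; rewrite !inE.
Qed.

Lemma level_space_le i : i <= h ->
  \sum_(C | is_node e L i C)
     (1 + #|[set D | (0 < i) && is_node e L i.-1 D && (D \subset C)]|
        + #|[set D in L i | cadj e C D]|) <= nodes i + nodes i.-1 + 2 * act i.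
Proof.
move=> ih; rewrite !big_split /= sum1dep_card -!addnA leq_add2l.
apply: leq_add (sum_card_adj_le ih).
case: i ih => [|i] ih; last exact: sum_card_children_le.
by rewrite big1 // => C _; apply/eqP; rewrite cards_eq0; apply/eqP/setP => D; rewrite !inE.
Qed.

Lemma ufo_nodes_le : ufo_nodes e L h <= 61 * #|T|.
Proof.
have nodes_l : ufo_nodes e L h = nodes 0 + \sum_(i < h) nodes i.+1 := big_ord_recl _ _.
have active_l : \sum_(i < h.+1) act i = act 0 + \sum_(i < h) act i.+1 := big_ord_recl _ _.
have active_r : \sum_(i < h.+1) act i = \sum_(i < h) act i + act h := big_ord_recr _ _.
have nodesS : \sum_(i < h) nodes i.+1 <= \sum_(i < h) act i.+1 + \sum_(i < h) act i.
  by rewrite -big_split; apply: leq_sum => i _; apply: card_nodesS.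
have := sum_ufo_active; have := card_nodes0; rewrite nodes_l.
lia.
Qed.

Lemma ufo_space_le : ufo_space e L h <= 183 * #|T|.
Proof.
rewrite /ufo_space; apply: (@leq_trans (\sum_(i < h.+1) (nodes i + nodes i.-1 + 2 * act i))).
  by apply: leq_sum => i _; apply: level_space_le; rewrite -ltnS.
have nodes_le : \sum_(i < h.+1) nodes i <= 61 * #|T| := ufo_nodes_le.
have nodes_r : \sum_(i < h.+1) nodes i = \sum_(i < h) nodes i + nodes h := big_ord_recr _ _.
have shifted : \sum_(i < h.+1) nodes i.-1 = nodes 0 + \sum_(i < h) nodes i := big_ord_recl _ _.
have active2 : \sum_(i < h.+1) 2 * act i = 2 * \sum_(i < h.+1) act i by rewrite big_distrr.
rewrite big_split active2 big_split /=.
have := sum_ufo_active; have := card_nodes0.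
(* As in [sum_active_cdeg], the [set]s make convertible copies syntactically equal. *)
set N := \sum_(i < h.+1) nodes i in nodes_le nodes_r *.
set N' := \sum_(i < h.+1) nodes i.-1 in shifted *.
set A := \sum_(i < h.+1) act i; set n := #|T| in nodes_le *.
lia.
Qed.

End UFOTree.

Theorem theorem4p1 :
  exists c : nat, forall (T : finType) (e : rel T)
    (L : nat -> {set {set T}}) (h : nat),
    forest e -> is_ufo e L h ->
    [/\ h <= c * (trunc_log 2 #|T|).+1,
        ufo_nodes e L h <= c * #|T| &
        ufo_space e L h <= c * #|T|].
Proof.
exists 183 => T e L h forest_e ufoL; split.
- have height := decay_height (ufo_active_decay forest_e ufoL) (isT : 0 < 29)
    (ufo_active0 ufoL) (ufo_active_gt0 forest_e ufoL).
  by apply: leq_trans height _; rewrite leq_mul2r orbT.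
- by apply: leq_trans (ufo_nodes_le forest_e ufoL) _; rewrite leq_mul2r orbT.
- exact: ufo_space_le.
Qed.
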